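(* Let $t\in\mathbb{Q}$, $t\neq 2$. Let $[x,y,1]$ be a point of $F_5\cap C_t$ (over $\overline{\mathbb{Q}}$) distinct from $P=[\zeta_3,\zeta_3^2,1]$ and $\overline P=[\zeta_3^2,\zeta_3,1]$. Then $f_t(x)=0$ and $y=\sum_{i=0}^5 a_i x^i$.
   Context: $F_5$ is the Fermat curve $x^5+y^5+z^5=0$ in $\mathbb{P}^2$; $\zeta_3$ is a primitive cube root of unity. For $t\in\mathbb{Q}$, $t\neq2$, $C_t$ is the conic $x^2+y^2+z^2+t(xy+xz+yz)=0$. Put $u=\frac{3t^2-2t+2}{t^2+t-1}$, $v=\frac{t^5-5t^4+10t^3-20t^2+15t-7}{(t-2)(t^2+t-1)^2}$, $w=\frac{-3t^5+10t^4-20t^3+20t^2-20t+6}{(t-2)(t^2+t-1)^2}$, and $f_t=X^6+uX^5+vX^4+wX^3+vX^2+uX+1\in\mathbb{Q}[X]$. Put $s=(t^4-3t^3-t^2+3t+1)(t-2)$ (nonzero for rational $t\ne2$) and $a_0=-\frac{(t^2+1)(t^3-t^2+2t-3)}{s}$, $a_1=-\frac{3t^7-9t^6+16t^5-15t^4+10t^3-11t^2+8t-7}{(t^2+t-1)s}$, $a_2=\frac{2t^8-14t^7+52t^6-99t^5+100t^4-54t^3+38t^2-44t+13}{(t^2+t-1)(t-2)s}$, $a_3=\frac{t^8+t^7-21t^6+65t^5-90t^4+78t^3-57t^2+32t-15}{(t^2+t-1)(t-2)s}$, $a_4=-\frac{2t^5-6t^4+13t^3-14t^2+7t-5}{s}$,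 $a_5=-\frac{(t^2+t-1)(t^3-t^2+2t-3)}{s}$. *)

From mathcomp Require Import all_boot all_order all_algebra all_field.
Set Implicit Arguments. Unset Strict Implicit. Unset Printing Implicit Defensive.
Import Order.TTheory GRing.Theory Num.Theory.
Local Open Scope ring_scope.

Definition ut (t : rat) : rat := (3 * t ^+ 2 - 2 * t + 2) / (t ^+ 2 + t - 1).
Definition vt (t : rat) : rat :=
  (t ^+ 5 - 5 * t ^+ 4 + 10 * t ^+ 3 - 20 * t ^+ 2 + 15 * t - 7)
  / ((t - 2) * (t ^+ 2 + t - 1) ^+ 2).
Definition wt (t : rat) : rat :=
  (- 3 * t ^+ 5 + 10 * t ^+ 4 - 20 * t ^+ 3 + 20 * t ^+ 2 - 20 * t + 6)
  / ((t - 2) * (t ^+ 2 + t - 1) ^+ 2).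

Definition ft (t : rat) : {poly rat} :=
  Poly [:: 1; ut t; vt t; wt t; vt t; ut t; 1].

Definition st (t : rat) : rat :=
  (t ^+ 4 - 3 * t ^+ 3 - t ^+ 2 + 3 * t + 1) * (t - 2).

Definition a0 (t : rat) : rat :=
  - ((t ^+ 2 + 1) * (t ^+ 3 - t ^+ 2 + 2 * t - 3)) / st t.
Definition a1 (t : rat) : rat :=
  - (3 * t ^+ 7 - 9 * t ^+ 6 + 16 * t ^+ 5 - 15 * t ^+ 4 + 10 * t ^+ 3
     - 11 * t ^+ 2 + 8 * t - 7) / ((t ^+ 2 + t - 1) * st t).
Definition a2 (t : rat) : rat :=
  (2 * t ^+ 8 - 14 * t ^+ 7 + 52 * t ^+ 6 - 99 * t ^+ 5 + 100 * t ^+ 4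
   - 54 * t ^+ 3 + 38 * t ^+ 2 - 44 * t + 13)
  / ((t ^+ 2 + t - 1) * (t - 2) * st t).
Definition a3 (t : rat) : rat :=
  (t ^+ 8 + t ^+ 7 - 21 * t ^+ 6 + 65 * t ^+ 5 - 90 * t ^+ 4 + 78 * t ^+ 3
   - 57 * t ^+ 2 + 32 * t - 15)
  / ((t ^+ 2 + t - 1) * (t - 2) * st t).
Definition a4 (t : rat) : rat :=
  - (2 * t ^+ 5 - 6 * t ^+ 4 + 13 * t ^+ 3 - 14 * t ^+ 2 + 7 * t - 5) / st t.
Definition a5 (t : rat) : rat :=
  - ((t ^+ 2 + t - 1) * (t ^+ 3 - t ^+ 2 + 2 * t - 3)) / st t.

Definition acoef (t : rat) (i : nat) : rat :=
  nth 0 [:: a0 t; a1 t; a2 t; a3 t; a4 t; a5 t] i.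

From mathcomp Require Import all_boot all_order all_algebra all_field.
From Pilot Require Import Defs.
From mathcomp Require Import ring.
Set Implicit Arguments. Unset Strict Implicit. Unset Printing Implicit Defensive.
Import GRing.Theory Num.Theory.
Local Open Scope ring_scope.

(* Put s = x + y. Eliminating xy between the quintic and the conic leaves
   (s + 1)^2 h(s) = 0, and s = -1 only at P and Pbar. Reducing h(s) modulo the
   conic, seen as a quadratic in s, leaves a linear relation
   r1(x) s + r0(x) = 0, whose resultant with the conic is f_t(x) up to a
   nonzero factor. As f_t is palindromic, r1 cannot vanish at its roots, so
   s = -r0/r1, which modulo f_t is x + sum a_i x^i. The factors that must not
   vanish are t - 2, t^2 + t - 1 and t^4 - 3t^3 - t^2 + 3t + 1; the last two
   have no rational roots since an integer root would divide 1. *)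

(* The data of Defs over an arbitrary field; over [rat] they are convertible
   to [ut], [vt], [wt], [ft] and [acoef]. *)
Section Coefficients.
Variable K : fieldType.
Implicit Types (T x : K).

Definition ucoef T := (3 * T ^+ 2 - 2 * T + 2) / (T ^+ 2 + T - 1).
Definition vcoef T :=
  (T ^+ 5 - 5 * T ^+ 4 + 10 * T ^+ 3 - 20 * T ^+ 2 + 15 * T - 7)
  / ((T - 2) * (T ^+ 2 + T - 1) ^+ 2).
Definition wcoef T :=
  (- 3 * T ^+ 5 + 10 * T ^+ 4 - 20 * T ^+ 3 + 20 * T ^+ 2 - 20 * T + 6)
  / ((T - 2) * (T ^+ 2 + T - 1) ^+ 2).
Definition fpoly T : {poly K} :=
  Poly [:: 1; ucoef T; vcoef T; wcoef T; vcoef T; ucoef T; 1].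

Definition sden T := (T ^+ 4 - 3 * T ^+ 3 - T ^+ 2 + 3 * T + 1) * (T - 2).
Definition acoefs T : seq K := [::
  - ((T ^+ 2 + 1) * (T ^+ 3 - T ^+ 2 + 2 * T - 3)) / sden T;
  - (3 * T ^+ 7 - 9 * T ^+ 6 + 16 * T ^+ 5 - 15 * T ^+ 4 + 10 * T ^+ 3
     - 11 * T ^+ 2 + 8 * T - 7) / ((T ^+ 2 + T - 1) * sden T);
  (2 * T ^+ 8 - 14 * T ^+ 7 + 52 * T ^+ 6 - 99 * T ^+ 5 + 100 * T ^+ 4
   - 54 * T ^+ 3 + 38 * T ^+ 2 - 44 * T + 13)
  / ((T ^+ 2 + T - 1) * (T - 2) * sden T);
  (T ^+ 8 + T ^+ 7 - 21 * T ^+ 6 + 65 * T ^+ 5 - 90 * T ^+ 4 + 78 * T ^+ 3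
   - 57 * T ^+ 2 + 32 * T - 15)
  / ((T ^+ 2 + T - 1) * (T - 2) * sden T);
  - (2 * T ^+ 5 - 6 * T ^+ 4 + 13 * T ^+ 3 - 14 * T ^+ 2 + 7 * T - 5) / sden T;
  - ((T ^+ 2 + T - 1) * (T ^+ 3 - T ^+ 2 + 2 * T - 3)) / sden T].

Definition yval T x := \sum_(i < 6) (acoefs T)`_i * x ^+ i.

Lemma horner_fpoly T x :
  (fpoly T).[x] = x ^+ 6 + ucoef T * x ^+ 5 + vcoef T * x ^+ 4
    + wcoef T * x ^+ 3 + vcoef T * x ^+ 2 + ucoef T * x + 1.
Proof. by rewrite horner_Poly /=; ring. Qed.

End Coefficients.

Section CoefficientsMorphism.
Variables (K L : fieldType) (f : {rmorphism K -> L}).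
Implicit Types (T : K).

Lemma map_fpoly T : map_poly f (fpoly T) = fpoly (f T).
Proof.
rewrite map_Poly ?rmorph0 //; congr Poly; rewrite /= !fmorph_div rmorph1.
do !congr (_ :: _).
all: by congr (_ / _); ring.
Qed.

Lemma map_acoefs T : map f (acoefs T) = acoefs (f T).
Proof.
rewrite /= !fmorph_div; do !congr (_ :: _).
all: by congr (_ / _); rewrite /sden; ring.
Qed.

End CoefficientsMorphism.

Lemma prim3_root_sum (R : idomainType) (zeta : R) :
  3.-primitive_root zeta -> zeta ^+ 2 + zeta + 1 = 0.
Proof.
move=> zeta3; have zeta_neq1 : zeta != 1.
  by have := prim_order_dvd zeta3 1; rewrite expr1 => <-.
have : (zeta - 1) * (zeta ^+ 2 + zeta + 1) = zeta ^+ 3 - 1 by ring.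
rewrite (prim_expr_order zeta3) subrr => /eqP.
by rewrite mulf_eq0 subr_eq0 (negPf zeta_neq1) => /eqP.
Qed.

Lemma prim3_root_eq (R : idomainType) (zeta x : R) :
  3.-primitive_root zeta -> x ^+ 2 + x + 1 = 0 -> x = zeta \/ x = zeta ^+ 2.
Proof.
move=> zeta3 x_root.
have : (x - zeta) * (x - zeta ^+ 2)
    = x ^+ 2 + x + 1 - (zeta ^+ 2 + zeta + 1) * x + (zeta ^+ 3 - 1) by ring.
rewrite x_root prim3_root_sum // (prim_expr_order zeta3) mul0r subr0 subrr addr0.
by move/eqP; rewrite mulf_eq0 !subr_eq0 => /orP[] /eqP; [left | right].
Qed.

Section FermatConic.
Variables (K : fieldType) (T : K).
Implicit Types (x y s z : K).

Definition conic x y := x ^+ 2 + y ^+ 2 + 1 + T * (x * y + x + y).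

(* (T - 2)^2 (x^5 + y^5 + 1), written in s = x + y and reduced with the
   conic, is (s + 1)^2 hsum s. *)
Definition hsum s :=
  (T ^+ 2 + T - 1) * s ^+ 3 + (3 * T ^+ 2 - 2 * T + 2) * s ^+ 2
  + (8 * T - 2 * T ^+ 2 - 3) * s + (T - 2) ^+ 2.

(* rem1 x * s + rem0 x is the remainder of hsum s modulo conic x (s - x). *)
Definition remL := (T - 2) * (T - 1) * (T ^+ 2 + T - 1).
Definition remM := 2 * T ^+ 4 - 5 * T ^+ 3 + 2 * T ^+ 2 - 2 * T + 4.
Definition rem1 x := remL * (x ^+ 2 + 1) + remM * x.

Definition rem0 x :=
  (3 * T ^+ 3 - T ^+ 4 + T ^+ 2 - 8 * T + 4) * x ^+ 3
  + (4 * T ^+ 3 - T ^+ 4 - 5 * T ^+ 2 + 4 * T - 4) * x ^+ 2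
  + (T ^+ 3 - T ^+ 2 - 3 * T + 2) * (x + 1).

Lemma fermat_conic_sum x y : x ^+ 5 + y ^+ 5 + 1 = 0 -> conic x y = 0 ->
  x + y + 1 = 0 \/ hsum (x + y) = 0.
Proof.
move=> fermat0 conic0; pose s := x + y.
have : (s + 1) ^+ 2 * hsum s = (T - 2) ^+ 2 * (x ^+ 5 + y ^+ 5 + 1)
    - conic x y * (5 * s * conic x y - 5 * (T - 2) * s ^+ 3
                   - 10 * s * (s ^+ 2 + T * s + 1)).
  by rewrite /hsum /conic /s; ring.
rewrite fermat0 conic0 mulr0 mul0r subrr => /eqP.
by rewrite mulf_eq0 expf_eq0 /= => /orP[] /eqP; [left | right].
Qed.

Lemma hsum_rem x y : conic x y = 0 -> hsum (x + y) = 0 ->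
  rem1 x * (x + y) + rem0 x = 0.
Proof.
move=> conic0 hsum0; pose s := x + y.
have -> : rem1 x * s + rem0 x = hsum s + conic x y *
    (T ^+ 3 * x + T ^+ 3 - T ^+ 2 * x - T ^+ 2 * s - 2 * T ^+ 2 - 3 * T * x
     - T * s + T + 2 * x + s - 2).
  by rewrite /rem1 /remL /remM /rem0 /hsum /conic /s; ring.
by rewrite hsum0 conic0 mul0r addr0.
Qed.

Hypotheses (T_neq2 : T != 2) (q2T_neq0 : T ^+ 2 + T - 1 != 0)
  (q4T_neq0 : T ^+ 4 - 3 * T ^+ 3 - T ^+ 2 + 3 * T + 1 != 0).

Let T2_neq0 : T - 2 != 0. Proof. by rewrite subr_eq0. Qed.

Lemma conic_sum_eqN1 zeta x y : 3.-primitive_root zeta ->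
  conic x y = 0 -> x + y + 1 = 0 ->
  (x, y) = (zeta, zeta ^+ 2) \/ (x, y) = (zeta ^+ 2, zeta).
Proof.
move=> zeta3 conic0 sum0.
have y_def : y = - x - 1 by rewrite -[y]subr0 -sum0; ring.
have x_root : x ^+ 2 + x + 1 = 0.
  have : (2 - T) * (x ^+ 2 + x + 1) = conic x y by rewrite /conic y_def; ring.
  rewrite conic0 => /eqP; rewrite mulf_eq0 subr_eq0 eq_sym (negPf T_neq2).
  by move/eqP.
have zeta_sum := prim3_root_sum zeta3.
have zeta2E : zeta ^+ 2 = - zeta - 1 by rewrite -[LHS]subr0 -zeta_sum; ring.
have zetaE : zeta = - zeta ^+ 2 - 1 by rewrite -[LHS]subr0 -zeta_sum; ring.
case: (prim3_root_eq zeta3 x_root) => x_def; rewrite y_def x_def.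
  by left; rewrite zeta2E.
by right; rewrite -zetaE.
Qed.

(* The resultant in s of conic x (s - x) and rem1 x * s + rem0 x. *)
Lemma fpoly_resultant x y :
  (T - 2) ^+ 3 * (T ^+ 2 + T - 1) ^+ 2 * (fpoly T).[x]
  = (rem1 x * (x + y) + rem0 x)
      * (rem1 x * (x + y) - rem0 x + ((T - 2) * x + T) * rem1 x)
    - rem1 x ^+ 2 * conic x y.
Proof.
rewrite horner_fpoly /ucoef /vcoef /wcoef /rem1 /remL /remM /rem0 /conic.
by field; rewrite T2_neq0 q2T_neq0.
Qed.

Lemma rem_root_fpoly x y : conic x y = 0 -> rem1 x * (x + y) + rem0 x = 0 ->
  root (fpoly T) x.
Proof.
move=> conic0 rem_eq0; apply/rootP/eqP.
have c_neq0 : (T - 2) ^+ 3 * (T ^+ 2 + T - 1) ^+ 2 != 0.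
  by rewrite mulf_neq0 ?expf_neq0.
have := fpoly_resultant x y; rewrite conic0 rem_eq0 mul0r mulr0 subr0 => /eqP.
by rewrite mulf_eq0 (negPf c_neq0).
Qed.

Definition fcubic z :=
  z ^+ 3 + ucoef T * z ^+ 2 + (vcoef T - 3) * z + (wcoef T - 2 * ucoef T).

Lemma horner_fpoly_recip x : x != 0 ->
  (fpoly T).[x] = x ^+ 3 * fcubic (x + x^-1).
Proof. by move=> x_neq0; rewrite horner_fpoly /fcubic; field. Qed.

Lemma rem1_recip x : x != 0 -> rem1 x = x * (remL * (x + x^-1) + remM).
Proof. by move=> x_neq0; rewrite /rem1; field. Qed.

Lemma fcubic_neq0 z : remL * z + remM = 0 -> fcubic z != 0.
Proof.
move=> /eqP; rewrite addr_eq0 => /eqP Lz.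
have : remL ^+ 3 * fcubic z
    = - ((T - 2) ^+ 4 * (T ^+ 4 - 3 * T ^+ 3 - T ^+ 2 + 3 * T + 1) ^+ 2).
  have -> : remL ^+ 3 * fcubic z = (remL * z) ^+ 3
      + ucoef T * remL * (remL * z) ^+ 2 + (vcoef T - 3) * remL ^+ 2 * (remL * z)
      + (wcoef T - 2 * ucoef T) * remL ^+ 3 by rewrite /fcubic; ring.
  rewrite Lz /remL /remM /ucoef /vcoef /wcoef.
  by field; rewrite T2_neq0 q2T_neq0.
apply: contra_eq_neq => ->; rewrite mulr0 eq_sym oppr_eq0.
by rewrite mulf_neq0 ?expf_neq0.
Qed.

Lemma rem1_neq0 x : root (fpoly T) x -> rem1 x != 0.
Proof.
move=> /rootP fx0; have x_neq0 : x != 0.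
  by apply: contra_eq_neq fx0 => ->; rewrite horner_coef0 coef_Poly oner_neq0.
rewrite rem1_recip // mulf_neq0 //.
apply: contra_eq_neq fx0 => /fcubic_neq0 fz_neq0.
by rewrite horner_fpoly_recip // mulf_neq0 ?expf_neq0.
Qed.

Lemma root_fpoly_rem_yval x : root (fpoly T) x ->
  rem1 x * (x + yval T x) + rem0 x = 0.
Proof.
move=> /rootP fx0; set q4 := T ^+ 4 - 3 * T ^+ 3 - T ^+ 2 + 3 * T + 1.
(* The cofactor is the quotient of the left-hand side by fpoly T. *)
have -> : rem1 x * (x + yval T x) + rem0 x =
  ((5 - 5 * T - 4 * T ^+ 2 - 13 * T ^+ 3 + 20 * T ^+ 4 - 5 * T ^+ 6
    + 2 * T ^+ 7 - T ^+ 8) / q4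
   + (11 * T - 3 - 10 * T ^+ 2 - 3 * T ^+ 3 + 5 * T ^+ 4 - T ^+ 5
      + 2 * T ^+ 6 - T ^+ 8) / q4 * x) * (fpoly T).[x].
  rewrite horner_fpoly /yval !big_ord_recr big_ord0 /= /ucoef /vcoef /wcoef.
  rewrite /sden /rem1 /remL /remM /rem0 /q4.
  by field; rewrite T2_neq0 q2T_neq0 q4T_neq0.
by rewrite fx0 mulr0.
Qed.

Lemma fermat_conic_root zeta x y : 3.-primitive_root zeta ->
  x ^+ 5 + y ^+ 5 + 1 = 0 -> conic x y = 0 ->
  (x, y) <> (zeta, zeta ^+ 2) -> (x, y) <> (zeta ^+ 2, zeta) ->
  root (fpoly T) x /\ y = yval T x.
Proof.
move=> zeta3 fermat0 conic0 neqP neqPbar.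
have hsum0 : hsum (x + y) = 0.
  have [sum0 | //] := fermat_conic_sum fermat0 conic0.
  by case: (conic_sum_eqN1 zeta3 conic0 sum0).
have rem_eq0 := hsum_rem conic0 hsum0.
have fx0 := rem_root_fpoly conic0 rem_eq0.
split=> //; apply/eqP; rewrite -subr_eq0.
have : rem1 x * (y - yval T x)
    = rem1 x * (x + y) + rem0 x - (rem1 x * (x + yval T x) + rem0 x) by ring.
rewrite rem_eq0 root_fpoly_rem_yval // subrr => /eqP.
by rewrite mulf_eq0 (negPf (rem1_neq0 fx0)).
Qed.

End FermatConic.

Lemma ratr_monic_root_int (p : {poly int}) (t : rat) :
  p \is monic -> root (map_poly intr p) (ratr t : algC) ->
  exists2 m : int, ratr t = m%:~R :> algC & root p m.
Proof.
move=> mon_p pt0; have pZ : map_poly intr p \is a polyOver (@Num.int algC).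
  by apply/polyOverP => i; rewrite coef_map rpred_int.
have mon_pZ : map_poly intr p \is @monic algC := monic_map _ mon_p.
have /intrP[m tm] :=
  Cint_rat_Aint (Crat_rat t) (root_monic_Aint pt0 mon_pZ pZ).
by exists m => //; move: pt0; rewrite tm rootE horner_map intr_eq0.
Qed.

Lemma ratr_quad_neq0 (t : rat) : (ratr t : algC) ^+ 2 + ratr t - 1 != 0.
Proof.
apply/eqP => q0; pose p : {poly int} := Poly [:: -1; 1; 1].
have [m _ /rootP] : exists2 m : int, ratr t = m%:~R :> algC & root p m.
  apply: ratr_monic_root_int; first by rewrite monicE lead_coefE (PolyK (c := 0)).
  apply/rootP; rewrite map_Poly ?rmorph0 // horner_Poly /= -[RHS]q0.
  by rewrite rmorphN rmorph1; ring.
rewrite horner_Poly /= => m_root.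
have /intUnitRing.unitzPl : (m + 1) * m = 1 by rewrite -[RHS]addr0 -m_root; ring.
by rewrite qualifE => /orP[] /eqP m_def; move: m_root; rewrite m_def.
Qed.

Lemma ratr_quart_neq0 (t : rat) :
  (ratr t : algC) ^+ 4 - 3 * ratr t ^+ 3 - ratr t ^+ 2 + 3 * ratr t + 1 != 0.
Proof.
apply/eqP => q0; pose p : {poly int} := Poly [:: 1; 3; -1; -3; 1].
have [m _ /rootP] : exists2 m : int, ratr t = m%:~R :> algC & root p m.
  apply: ratr_monic_root_int; first by rewrite monicE lead_coefE (PolyK (c := 0)).
  apply/rootP; rewrite map_Poly ?rmorph0 // horner_Poly /= -[RHS]q0.
  by rewrite !rmorphN rmorph1; ring.
rewrite horner_Poly /= => m_root.
have /intUnitRing.unitzPl : (3 * m ^+ 2 + m - m ^+ 3 - 3) * m = 1.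
  by rewrite -[RHS]subr0 -m_root; ring.
by rewrite qualifE => /orP[] /eqP m_def; move: m_root; rewrite m_def.
Qed.

Theorem proposition2 (t : rat) (zeta x y : algC) :
  t != 2 ->
  3.-primitive_root zeta ->
  x ^+ 5 + y ^+ 5 + 1 = 0 ->
  x ^+ 2 + y ^+ 2 + 1 + ratr t * (x * y + x + y) = 0 ->
  (x, y) <> (zeta, zeta ^+ 2) ->
  (x, y) <> (zeta ^+ 2, zeta) ->
  root (map_poly ratr (ft t)) x /\
  y = \sum_(i < 6) ratr (acoef t i) * x ^+ i.
Proof.
move=> t_neq2 zeta3 fermat0 conic0 neqP neqPbar.
have T_neq2 : (ratr t : algC) != 2 by rewrite -(ratr_nat algC 2) fmorph_eq.
have [fx0 y_def] := fermat_conic_root T_neq2 (ratr_quad_neq0 t)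
  (ratr_quart_neq0 t) zeta3 fermat0 conic0 neqP neqPbar.
split; first by rewrite -[ft t]/(fpoly t) map_fpoly.
rewrite y_def /yval -map_acoefs; apply: eq_bigr => i _.
by rewrite (nth_map 0).
Qed.
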